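(* Let $p$ be an odd prime. For $1\le k\le p$ let $\nu_k:=2\cos\left(\frac{(2k-1)\pi}{2p}\right)$ (so $\nu_{(p+1)/2}=0$). For $i\ge 0$ let $R_i(x):=2T_i(x/2)\in\mathbb{Z}[x]$. Let $Q_{4p}$ be the $p\times p$ matrix obtained from $\big(R_i(\nu_k)\big)_{1\le k\le p,\ 0\le i\le p-1}$ (row index $k$, column index $i$) by interchanging its first row and its $\frac{p+1}{2}$-th row; write $\theta_1,\dots,\theta_{p-1}$ for the nodes $\nu_k$ corresponding, in order, to rows $2,\dots,p$ of $Q_{4p}$ (so its first row is $(R_0(0),R_1(0),\dots,R_{p-1}(0))$). Let $F$ be the $p\times p$ matrix with $1$ on the diagonal, $-1$ in positions $(j,1)$ for $2\le j\le p$, and $0$ elsewhere, and let $$C=\begin{pmatrix}1 & \mathbf{r}\\ \mathbf{0} & I_{p-1}\end{pmatrix},\qquad \mathbf{r}=(r_1,\dots,r_{p-1})=(0,1,0,-1,0,1,0,-1,\dots),$$ i.e. $r_i=0$ for $i$ odd, $r_i=1$ for $i\equiv2\pmod4$, $r_i=-1$ for $i\equiv0\pmod4$. Then $$FQ_{4p}C=\begin{pmatrix}2 & \mathbf{0}^t\\ \mathbf{0} & N_{4p}\end{pmatrix},\qquad N_{4p}=\big(R_i^*(\theta_j)\big)_{1\le j\le p-1,\ 1\le i\le p-1},$$ where for each $i\in\{1,\dots,p-1\}$, $R_i^*(x)\in\mathbb{Z}[x]$ is monic of degree $i$ with zero constant term. In particular $N_{4p}$ is invertible and $\mathrm{Cond}(N_{4p})\le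 p(p+1)(2p-1)^2$.
   Context: $T_i$ is the Tchebycheff polynomial of the first kind ($T_0=1$, $T_1=x$, $T_i=2xT_{i-1}-T_{i-2}$). For an invertible complex matrix $A$, $\|A\|=\sqrt{\mathrm{Tr}(AA^* )}$ is the Frobenius norm and $\mathrm{Cond}(A)=\|A\|\,\|A^{-1}\|$. The nodes $\theta_1,\dots,\theta_{p-1}$ are exactly the Galois conjugates of $2\cos(\pi/(2p))$, a primitive element of the maximal totally real subfield of the $4p$-th cyclotomic field. *)

From HB Require Import structures.
From mathcomp Require Import all_boot all_order all_algebra perm.
From mathcomp Require Import reals trigo.
Set Implicit Arguments. Unset Strict Implicit. Unset Printing Implicit Defensive.
Import Order.TTheory GRing.Theory Num.Theory.
Local Open Scope ring_scope.

Section Defs.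
Variable R : realType.

Fixpoint chebT (i : nat) : {poly R} :=
  match i with
  | 0%N => 1
  | 1%N => 'X
  | (S ((S m) as k)) => 'X *+ 2 * chebT k - chebT m
  end.

Definition Rcheb (i : nat) (x : R) : R := 2 * (chebT i).[x / 2].

(* Throughout p = n.+1.  Node nu_{k+1} (paper's 1-based k+1, k : 'I_p):
   2 cos ((2(k+1)-1) pi / (2p)). *)
Definition nu (n : nat) (k : 'I_n.+1) : R :=
  2 * cos (((2 * k + 1)%:R * pi) / (2 * n.+1)%:R).

Definition Qraw (n : nat) : 'M[R]_n.+1 := \matrix_(k, i) Rcheb i (nu k).

(* index (p+1)/2 (1-based) = n./2 (0-based) *)
Definition midx (n : nat) : 'I_n.+1 := inord n./2.

Definition Q4p (n : nat) : 'M[R]_n.+1 := xrow ord0 (midx n) (Qraw n).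

(* theta_j (j : 'I_n, paper's j+1): the node of row j+2 of Q_{4p} *)
Definition theta (n : nat) (j : 'I_n) : R :=
  nu (tperm ord0 (midx n) (lift ord0 j)).

Definition Fmx (n : nat) : 'M[R]_n.+1 :=
  \matrix_(i, j) if i == j then 1
                 else if (j == ord0) && (i != ord0) then -1 else 0.

Definition rcoef (i : nat) : R :=
  if odd i then 0 else if (i %% 4 == 2)%N then 1 else -1.

Definition Cmx (n : nat) : 'M[R]_n.+1 :=
  \matrix_(i, j) if i == j then 1
                 else if i == ord0 then rcoef j else 0.

(* Frobenius norm sqrt(Tr(A A^star)); for real matrices A^star = A^T *)
Definition frob (m : nat) (A : 'M[R]_m) : R := Num.sqrt (\tr (A *m A^T)).

Definition Cond (m : nat) (A : 'M[R]_m) : R := frob A * frob (invmx A).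

End Defs.

From HB Require Import structures.
From mathcomp Require Import all_boot all_order all_algebra perm.
From mathcomp Require Import reals trigo.
From mathcomp Require Import ring lra zify.
Set Implicit Arguments. Unset Strict Implicit. Unset Printing Implicit Defensive.
Import Order.TTheory GRing.Theory Num.Theory.
Local Open Scope ring_scope.

(* R_i(2 cos t) = 2 cos (i t), so at the nodes nu_k = 2 cos ((2k-1) pi / 2p) discrete
   cosine orthogonality gives Q^T Q = diag(4p, 2p, ..., 2p) for Q = Q_{4p}: the inverse
   D^-1 Q^T has entries at most 1/p.  Writing F = 1 - G and C = 1 + E with G^2 = E^2 = 0,
   the matrix (1 - E) D^-1 Q^T (1 + G) inverts F Q C and has entries at most 4p.  As
   R_0 = 2 and the first row of Q is (R_i(0))_i = (-2 r_i)_i, F Q C is block diagonal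
   with lower block N = (R_i(theta_j) - R_i(0)), so N^-1 is the lower block of that
   inverse.  Bounding both Frobenius norms entrywise (by 4 and 4p) gives
   Cond(N) <= 16 (p-1)^2 p. *)

Lemma nat_ind2 (P : nat -> Prop) :
  P 0%N -> P 1%N -> (forall i, P i -> P i.+1 -> P i.+2) -> forall i, P i.
Proof.
move=> P0 P1 PSS i; suff: P i /\ P i.+1 by case.
by elim: i => [|i [Pi PiS]]; split=> //; apply: PSS.
Qed.

Section Chebyshev.
Variable R : realType.

Lemma Rcheb0 (x : R) : Rcheb 0 x = 2.
Proof. by rewrite /Rcheb /= hornerC mulr1. Qed.

Lemma Rcheb1 (x : R) : Rcheb 1 x = x.
Proof. by rewrite /Rcheb /= hornerX mulrC mulfVK ?pnatr_eq0. Qed.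

Lemma RchebSS i (x : R) : Rcheb i.+2 x = Rcheb i.+1 x * x - Rcheb i x.
Proof.
rewrite /Rcheb /= -/(chebT R i.+1) hornerD hornerN hornerM hornerMn hornerX.
by field.
Qed.

Lemma cos_mul_cos_nat i j (x : R) : (j <= i)%N ->
  2 * cos (i%:R * x) * (2 * cos (j%:R * x)) =
  2 * cos ((i + j)%:R * x) + 2 * cos ((i - j)%:R * x).
Proof. by move=> le_ji; rewrite natrD natrB // !mulrDl mulNr cosB cosD; ring. Qed.

Lemma Rcheb_2cos i (x : R) : Rcheb i (2 * cos x) = 2 * cos (i%:R * x).
Proof.
elim/nat_ind2: i => [||i IHi IHiS].
- by rewrite Rcheb0 mul0r cos0 mulr1.
- by rewrite Rcheb1 mul1r.
have := cos_mul_cos_nat x (ltn0Sn i); rewrite addn1 subn1 /= mulr1n mul1r.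
by rewrite RchebSS IHi IHiS => ->; rewrite addrK.
Qed.

Lemma rcoefSS j : rcoef R j.+2 = - rcoef R j.
Proof.
rewrite /rcoef /= negbK; case: ifP => [_|/negbT j_even]; first by rewrite oppr0.
have -> : (j.+2 %% 4 == 2)%N = ~~ (j %% 4 == 2)%N.
  have j2 : (j %% 2 = 0)%N by rewrite modn2 (negbTE j_even).
  by case: eqP; case: eqP => /=; lia.
by case: (j %% 4 == 2)%N; rewrite /= ?opprK.
Qed.

Lemma normr_rcoef_le j : `|rcoef R j| <= 1.
Proof.
by rewrite /rcoef; case: ifP; rewrite ?normr0 //; case: ifP; rewrite ?normrN normr1.
Qed.

Lemma Rcheb_at0 j : Rcheb j (0 : R) = - 2 * rcoef R j.
Proof.
elim/nat_ind2: j => [||j IHj _].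
- by rewrite Rcheb0 /rcoef /= mulrN1 opprK.
- by rewrite Rcheb1 /rcoef /= mulr0.
- by rewrite RchebSS mulr0 sub0r IHj rcoefSS mulrN.
Qed.

End Chebyshev.

Fixpoint Rpoly (i : nat) : {poly int} :=
  match i with
  | 0%N => 2%:P
  | 1%N => 'X
  | (S ((S m) as k)) => Rpoly k * 'X - Rpoly m
  end.

Lemma size_Rpoly i : size (Rpoly i) = i.+1.
Proof.
elim/nat_ind2: i => [||i IHi IHiS]; [exact: size_polyC | exact: size_polyX |].
rewrite /= -/(Rpoly i.+1).
have RiS_neq0 : Rpoly i.+1 != 0 by rewrite -size_poly_gt0 IHiS.
by rewrite size_polyDl ?size_mulX ?IHiS // size_polyN IHi.
Qed.

Lemma Rpoly_monic i : Rpoly i.+1 \is monic.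
Proof.
elim: i => [|i IHi]; first exact: monicX.
rewrite monicE /= -/(Rpoly i.+1) lead_coefDl ?lead_coefMX ?(eqP IHi) //.
by rewrite size_polyN size_mulX -?size_poly_gt0 !size_Rpoly.
Qed.

Lemma horner_Rpoly (R : realType) i (x : R) :
  (map_poly (fun z : int => z%:~R) (Rpoly i)).[x] = Rcheb i x.
Proof.
elim/nat_ind2: i => [||i IHi IHiS].
- by rewrite map_polyC hornerC Rcheb0.
- by rewrite map_polyX hornerX Rcheb1.
rewrite /= -/(Rpoly i.+1) rmorphB rmorphM /= map_polyX.
by rewrite hornerD hornerN hornerMX IHi IHiS RchebSS.
Qed.

Definition Rstar (i : nat) : {poly int} := Rpoly i - ((Rpoly i)`_0)%:P.

Lemma Rstar_spec i : (0 < i)%N ->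
  [/\ Rstar i \is monic, size (Rstar i) = i.+1 & (Rstar i)`_0 = 0].
Proof.
case: i => // i _.
have small_const : (size (- ((Rpoly i.+1)`_0)%:P) < size (Rpoly i.+1))%N.
  by rewrite size_polyN size_Rpoly ltnS (leq_trans (size_polyC_leq1 _)).
split; rewrite /Rstar.
- by rewrite monicE lead_coefDl // (eqP (Rpoly_monic i)).
- by rewrite size_polyDl // size_Rpoly.
- by rewrite coefB coefC subrr.
Qed.

Lemma horner_Rstar (R : realType) i (x : R) :
  (map_poly (fun z : int => z%:~R) (Rstar i)).[x] = Rcheb i x - Rcheb i 0.
Proof.
rewrite rmorphB /= map_polyC hornerD hornerN hornerC -!horner_Rpoly.
by rewrite horner_coef0 coef_map.
Qed.

Section DiscreteCosineOrthogonality.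
Variable R : realType.

Lemma sin_natpi m : sin (m%:R * pi) = 0 :> R.
Proof. by have := alternatingn (@sinDpi R) m 0; rewrite add0r sin0 mulr0 mulr_natl. Qed.

Lemma sum_cos_odd_mul p (b : R) :
  2 * sin b * \sum_(k < p) cos ((2 * k + 1)%:R * b) = sin ((2 * p)%:R * b).
Proof.
have telescope k : 2 * sin b * cos ((2 * k + 1)%:R * b) =
                   sin ((2 * k.+1)%:R * b) - sin ((2 * k)%:R * b).
  have -> : (2 * k.+1)%:R * b = (2 * k + 1)%:R * b + b by rewrite !natrD !natrM; ring.
  have -> : (2 * k)%:R * b = (2 * k + 1)%:R * b - b by rewrite natrD; ring.
  rewrite sinD sinB; ring.
rewrite mulr_sumr; under eq_bigr => k _ do rewrite telescope.
rewrite -(big_mkord xpredT (fun k => sin ((2 * k.+1)%:R * b) - sin ((2 * k)%:R * b))).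
by rewrite telescope_sumr // muln0 mul0r sin0 subr0.
Qed.

Definition nu_angle (n k : nat) : R := ((2 * k + 1)%:R * pi) / (2 * n.+1)%:R.

Lemma nuE n (k : 'I_n.+1) : nu R k = 2 * cos (nu_angle n k).
Proof. by []. Qed.

Lemma sum_cos_nu_angle n m : (0 < m < 2 * n.+1)%N ->
  \sum_(k < n.+1) cos (m%:R * nu_angle n k) = 0.
Proof.
move=> /andP[m_gt0 m_lt]; set b : R := m%:R * pi / (2 * n.+1)%:R.
have sin_b_gt0 : 0 < sin b.
  apply: sin_gt0_pi; rewrite divr_gt0 ?mulr_gt0 ?pi_gt0 ?ltr0n //=.
  by rewrite ltr_pdivrMr ?ltr0n // mulrC ltr_pM2l ?pi_gt0 // ltr_nat.
apply: (@mulfI _ (2 * sin b)); first by rewrite mulf_neq0 ?gt_eqF.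
have angleE k : m%:R * nu_angle n k = (2 * k + 1)%:R * b.
  by rewrite /nu_angle /b; ring.
under eq_bigr do rewrite angleE.
rewrite sum_cos_odd_mul mulr0 mulrC /b divfK ?sin_natpi //.
by rewrite pnatr_eq0.
Qed.

Lemma sum_Rcheb_nu n i j : (i <= n)%N -> (j <= n)%N ->
  \sum_(k < n.+1) Rcheb i (nu R k) * Rcheb j (nu R k) =
  if i == j then (if i == 0%N then 4 else 2) * n.+1%:R else 0.
Proof.
wlog le_ji : i j / (j <= i)%N.
  move=> wlog_ji i_le j_le; case: (leqP j i) => [|/ltnW] le; first exact: wlog_ji.
  under eq_bigr do rewrite mulrC.
  by rewrite wlog_ji // eq_sym; case: eqP => // ->.
move=> i_le j_le.
under eq_bigr do rewrite nuE !Rcheb_2cos cos_mul_cos_nat //.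
have sum_cos0 : \sum_(k < n.+1) cos (0%:R * nu_angle n k) = n.+1%:R.
  by under eq_bigr do rewrite mul0r cos0; rewrite sumr_const card_ord.
rewrite big_split -!mulr_sumr /=.
case: (eqVneq i j) => [<-|ne_ij]; last by rewrite !sum_cos_nu_angle ?mulr0 ?addr0 //; lia.
rewrite subnn sum_cos0.
case: (eqVneq i 0%N) => [->|i_neq0]; first by rewrite sum_cos0; ring.
by rewrite sum_cos_nu_angle; [ring | lia].
Qed.

End DiscreteCosineOrthogonality.

Lemma mulmx_1D_1B (R : pzRingType) m (A : 'M[R]_m) :
  A *m A = 0 -> (1%:M + A) *m (1%:M - A) = 1%:M.
Proof. by move=> AA0; rewrite mulmxDl mul1mx mulmxBr mulmx1 AA0 subr0 subrK. Qed.

Lemma mulmx_1B_1D (R : pzRingType) m (A : 'M[R]_m) :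
  A *m A = 0 -> (1%:M - A) *m (1%:M + A) = 1%:M.
Proof. by move=> AA0; rewrite mulmxBl mul1mx mulmxDr mulmx1 AA0 addr0 addrK. Qed.

Lemma block_diag_mx_left_inv (R : comUnitRingType) m1 m2 (Y : 'M[R]_(m1 + m2))
    (A : 'M_m1) (B : 'M_m2) :
  Y *m block_mx A 0 0 B = 1%:M -> B \in unitmx /\ invmx B = drsubmx Y.
Proof.
rewrite -[Y]submxK mulmx_block (scalar_mx_block m1 m2 1).
case/eq_block_mx=> _ _ _; rewrite mulmx0 add0r submxK => YB1.
have [_ B_unit] := mulmx1_unit YB1; split=> //.
by rewrite -[invmx B]mul1mx -YB1 -mulmxA mulmxV // mulmx1.
Qed.

Lemma normr_mulmx_le (R : numDomainType) m1 m2 m3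
    (A : 'M[R]_(m1, m2)) (B : 'M[R]_(m2, m3)) (a b : R) :
  (forall i j, `|A i j| <= a) -> (forall i j, `|B i j| <= b) ->
  forall i j, `|(A *m B) i j| <= m2%:R * (a * b).
Proof.
move=> A_le B_le i j; rewrite mxE; apply: le_trans (ler_norm_sum _ _ _) _.
have -> : m2%:R * (a * b) = \sum_(l < m2) a * b.
  by rewrite sumr_const card_ord mulr_natl.
by apply: ler_sum => l _; rewrite normrM ler_pM.
Qed.

Lemma normr_1Dmx_le (R : numDomainType) m (X : 'M[R]_m) :
  (forall i j, `|X i j| <= 1) -> forall i j, `|(1%:M + X) i j| <= 2.
Proof.
move=> X_le i j; rewrite !mxE; apply: le_trans (ler_normD _ _) _.
by rewrite -[2]/(1 + 1) lerD //; case: (i == j); rewrite ?normr1 ?normr0.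
Qed.

Lemma frob_le (R : realType) m (A : 'M[R]_m) (c : R) :
  0 <= c -> (forall i j, `|A i j| <= c) -> frob A <= m%:R * c.
Proof.
move=> c_ge0 A_le; rewrite /frob -[m%:R * c]ger0_norm ?mulr_ge0 //.
rewrite -sqrtr_sqr; apply: ler_wsqrtr.
have -> : (m%:R * c) ^+ 2 = \sum_(i < m) \sum_(j < m) c * c.
  by rewrite !sumr_const card_ord -mulrnA -[c * c *+ _]mulr_natl natrM; ring.
apply: ler_sum => i _; rewrite mxE; apply: ler_sum => j _; rewrite mxE.
by apply: le_trans (ler_norm _) _; rewrite normrM ler_pM.
Qed.

Section FQC.
Variables (R : realType) (n : nat).
Hypothesis p_odd : odd n.+1.

Local Notation p := (n.+1%:R : R).
Local Notation Q := (Q4p R n).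
Local Notation sigma := (tperm ord0 (midx n)).

Lemma nu_midx : nu R (midx n) = 0.
Proof.
have half_n : (2 * n./2 + 1 = n.+1)%N.
  by move: p_odd => /= /negPf n_even; have := odd_double_half n; rewrite n_even; lia.
rewrite /nu /midx inordK; last by rewrite ltnS leq_half_double; lia.
rewrite half_n (_ : _ / _ = pi / 2) ?cos_pihalf ?mulr0 // natrM.
by field; rewrite nat1r pnatr_eq0.
Qed.

Lemma Q4pE k i : Q k i = Rcheb i (nu R (sigma k)).
Proof. by rewrite /Q4p xrowEsub !mxE. Qed.

Lemma normr_Rcheb_nu i (k : 'I_n.+1) : `|Rcheb i (nu R k)| <= 2.
Proof.
rewrite nuE Rcheb_2cos normrM normr_nat -[leRHS]mulr1 ler_wpM2l //.
exact: cos_max.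
Qed.

Definition colnorm2 (i : 'I_n.+1) : R := (if i == ord0 then 4 else 2) * p.

Lemma Q4p_orth : Q^T *m Q = diag_mx (\row_i colnorm2 i).
Proof.
apply/matrixP => i j; rewrite mxE.
rewrite (eq_bigr (fun k => Rcheb i (nu R (sigma k)) * Rcheb j (nu R (sigma k))));
  last by move=> k _; rewrite mxE !Q4pE.
rewrite (reindex_inj (@perm_inj _ sigma)) /=.
under eq_bigr do rewrite tpermK.
rewrite sum_Rcheb_nu ?leq_ord // mxE [(\row__ _) _ _]mxE /colnorm2.
case: (eqVneq i j) => [<-|ne_ij]; first by rewrite !eqxx.
by rewrite ifF ?mulr0n //; exact: (negPf ne_ij).
Qed.

Lemma colnorm2_ge i : 2 * p <= colnorm2 i.
Proof. by rewrite /colnorm2 ler_pM2r ?ltr0n //; case: ifP; rewrite ?ler_nat. Qed.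

Lemma colnorm2_neq0 i : colnorm2 i != 0.
Proof. by rewrite gt_eqF // (lt_le_trans _ (colnorm2_ge i)) ?mulr_gt0 ?ltr0n. Qed.

Definition Qinv : 'M[R]_n.+1 := diag_mx (\row_i (colnorm2 i)^-1) *m Q^T.

Lemma Qinv_mulmx : Qinv *m Q = 1%:M.
Proof.
rewrite /Qinv -mulmxA Q4p_orth mul_diag_mx; apply/matrixP => i j; rewrite !mxE.
by case: eqP => _; rewrite ?mulr1n ?mulr0n ?mulr0 ?mulVf ?colnorm2_neq0.
Qed.

Lemma normr_Qinv_le i j : `|Qinv i j| <= p^-1.
Proof.
rewrite /Qinv mul_diag_mx mxE [(\row__ _) _ _]mxE [Q^T _ _]mxE normrM normfV Q4pE.
have p_gt0 : 0 < p by rewrite ltr0n.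
have q_ge := colnorm2_ge i.
rewrite (@ger0_norm _ (colnorm2 i)); last by apply: le_trans _ q_ge; lra.
have -> : p^-1 = (2 * p)^-1 * 2 by rewrite invfM mulrAC mulVf ?mul1r // pnatr_eq0.
apply: ler_pM; rewrite ?invr_ge0 ?normr_Rcheb_nu ?lef_pV2 ?posrE //; lra.
Qed.

Definition Gmx : 'M[R]_n.+1 := \matrix_(k, l) ((k != ord0) && (l == ord0))%:R.
Definition Emx : 'M[R]_n.+1 :=
  \matrix_(l, j) (((l == ord0) && (j != ord0))%:R * rcoef R j).

Lemma Fmx_1B : Fmx R n = 1%:M - Gmx.
Proof.
apply/matrixP => i j; rewrite !mxE.
case: (eqVneq i j) => [<-|_] /=; first by case: (i == ord0); rewrite /= subr0.
by rewrite andbC sub0r; case: (_ && _); rewrite ?oppr0.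
Qed.

Lemma Cmx_1D : Cmx R n = 1%:M + Emx.
Proof.
apply/matrixP => i j; rewrite !mxE.
case: (eqVneq i j) => [<-|ne_ij] /=; first by case: (i == ord0); rewrite /= mul0r addr0.
rewrite add0r; case: (eqVneq i ord0) => [i0|_] /=; last by rewrite mul0r.
by rewrite -i0 eq_sym ne_ij mul1r.
Qed.

Lemma Gmx_sqr0 : Gmx *m Gmx = 0.
Proof.
apply/matrixP => i j; rewrite !mxE; apply: big1 => l _; rewrite !mxE.
by case: (l == ord0); rewrite /= ?andbF ?mulr0 ?mul0r.
Qed.

Lemma Emx_sqr0 : Emx *m Emx = 0.
Proof.
apply/matrixP => i j; rewrite !mxE; apply: big1 => l _; rewrite !mxE.
by case: (l == ord0); rewrite /= ?andbF ?mul0r ?mulr0.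
Qed.

Lemma mulFmxE (A : 'M[R]_n.+1) k i :
  (Fmx R n *m A) k i = A k i - (k != ord0)%:R * A ord0 i.
Proof.
rewrite Fmx_1B mulmxBl mul1mx !mxE (bigD1 ord0) //= big1 ?addr0 => [|l /negPf l_neq0].
  by rewrite !mxE eqxx andbT.
by rewrite !mxE l_neq0 andbF mul0r.
Qed.

Lemma mulmxCmxE (A : 'M[R]_n.+1) k j :
  (A *m Cmx R n) k j = A k j + (j != ord0)%:R * rcoef R j * A k ord0.
Proof.
rewrite Cmx_1D mulmxDr mulmx1 !mxE (bigD1 ord0) //= big1 ?addr0 => [|l /negPf l_neq0].
  by rewrite !mxE eqxx mulrC.
by rewrite !mxE l_neq0 mul0r mulr0.
Qed.

Lemma FQC_entry k j : (Fmx R n *m Q *m Cmx R n) k j =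
  if k == ord0 then (if j == ord0 then 2 else 0)
  else if j == ord0 then 0 else Rcheb j (nu R (sigma k)) - Rcheb j 0.
Proof.
rewrite mulmxCmxE !mulFmxE !Q4pE tpermL nu_midx.
case: (eqVneq k ord0) => [->|_]; case: (eqVneq j ord0) => [->|_] /=;
  rewrite ?tpermL ?nu_midx ?Rcheb0 ?Rcheb_at0 ?mul0r ?mul1r ?subrr ?mulr0 ?addr0 ?subr0 //.
ring.
Qed.

Definition Nmx : 'M[R]_n :=
  \matrix_(j, i) (map_poly (fun z : int => z%:~R) (Rstar i.+1)).[theta R j].

Lemma NmxE j i : Nmx j i = Rcheb i.+1 (theta R j) - Rcheb i.+1 0.
Proof. by rewrite mxE horner_Rstar. Qed.

Lemma FQC_block : Fmx R n *m Q *m Cmx R n = block_mx (2%:M : 'M[R]_1) 0 0 Nmx.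
Proof.
apply/(@matrixP _ (1 + n) (1 + n)) => k j.
rewrite FQC_entry -(splitK k) -(splitK j).
case: (split k) => k'; case: (split j) => j'.
- by rewrite block_mxEul !ord1 !mxE.
- by rewrite block_mxEur !ord1 mxE.
- by rewrite block_mxEdl !ord1 mxE.
- rewrite block_mxEdr NmxE /theta.
  by have -> : unsplit (inr k') = lift ord0 k' :> 'I_(1 + n) by apply: val_inj.
Qed.

Lemma normr_Gmx_le i j : `|Gmx i j| <= 1.
Proof. by rewrite mxE; case: (_ && _); rewrite ?normr1 ?normr0. Qed.

Lemma normr_Emx_le i j : `|Emx i j| <= 1.
Proof.
by rewrite mxE; case: (_ && _); rewrite ?mul1r ?normr_rcoef_le // mul0r normr0.
Qed.

Definition FQCinv : 'M[R]_n.+1 := (1%:M - Emx) *m Qinv *m (1%:M + Gmx).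

Lemma FQCinv_mulmx : FQCinv *m (Fmx R n *m Q *m Cmx R n) = 1%:M.
Proof.
rewrite Fmx_1B Cmx_1D /FQCinv 2!mulmxA.
rewrite -(mulmxA _ (1%:M + Gmx)) (mulmx_1D_1B Gmx_sqr0) mulmx1.
by rewrite -(mulmxA _ Qinv) Qinv_mulmx mulmx1 (mulmx_1B_1D Emx_sqr0).
Qed.

Lemma normr_FQCinv_le i j : `|FQCinv i j| <= 4 * p.
Proof.
have p_gt0 : 0 < p by rewrite ltr0n.
have normr_1BE : forall i j, `|(1%:M - Emx) i j| <= 2.
  by apply: normr_1Dmx_le => k l; rewrite mxE normrN normr_Emx_le.
have := normr_mulmx_le (normr_mulmx_le normr_1BE normr_Qinv_le)
                       (normr_1Dmx_le normr_Gmx_le) i j.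
move/le_trans; apply; rewrite [p * (2 / p)]mulrC divfK ?gt_eqF //; lra.
Qed.

Lemma normr_Nmx_le j i : `|Nmx j i| <= 4.
Proof.
rewrite NmxE -nu_midx; apply: le_trans (ler_normB _ _) _.
have := normr_Rcheb_nu i.+1 (midx n).
by have := normr_Rcheb_nu i.+1 (sigma (lift ord0 j)); lra.
Qed.

End FQC.

Theorem mainTheorem6 (R : realType) (n : nat) :
  prime n.+1 -> odd n.+1 ->
  exists (N : 'M[R]_n) (Rstar : nat -> {poly int}),
    [/\ forall i : nat, (1 <= i <= n)%N ->
          [/\ Rstar i \is monic, size (Rstar i) = i.+1 & (Rstar i)`_0 = 0],
        (forall (j i : 'I_n),
          N j i = (map_poly (fun z : int => z%:~R) (Rstar i.+1)).[theta R j]),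
        Fmx R n *m Q4p R n *m Cmx R n = block_mx (2%:M : 'M[R]_1) 0 0 N,
        N \in unitmx
      & Cond N <= (n.+1 * n.+2 * (2 * n.+1 - 1) ^ 2)%:R].
Proof.
move=> _ p_odd.
have FQCinv_block : (FQCinv R n : 'M_(1 + n)) *m block_mx 2%:M 0 0 (Nmx R n) = 1%:M.
  by rewrite -(FQC_block R p_odd) FQCinv_mulmx.
have [N_unit invN] := block_diag_mx_left_inv FQCinv_block.
exists (Nmx R n), Rstar; split=> //.
- by move=> i /andP[i_gt0 _]; exact: Rstar_spec.
- by move=> j i; rewrite mxE.
- exact: FQC_block.
have frobN : frob (Nmx R n) <= n%:R * 4.
  by apply: frob_le => //; exact: normr_Nmx_le.
have frobNinv : frob (invmx (Nmx R n)) <= n%:R * (4 * n.+1%:R).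
  rewrite invN; apply: frob_le => [|i j]; first by rewrite mulr_ge0.
  by rewrite mxE [dsubmx _ _ _]mxE; exact: normr_FQCinv_le.
apply: le_trans (ler_pM (sqrtr_ge0 _) (sqrtr_ge0 _) frobN frobNinv) _.
have : (n * 4 * (n * (4 * n.+1)) <= n.+1 * n.+2 * (2 * n.+1 - 1) ^ 2)%N by nia.
by rewrite -(ler_nat R) !natrM.
Qed.
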